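(* Let $\mathcal{A}$ be an abelian category. (1) Let $M,N_1,\dots,N_n$ be objects of $\mathcal{A}$. Then $\bigoplus_{i=1}^n N_i$ is strongly $M$-Rickart if and only if $N_i$ is strongly $M$-Rickart for every $i\in\{1,\dots,n\}$. (2) Let $M_1,\dots,M_n,N$ be objects of $\mathcal{A}$. Then $N$ is dual strongly $\bigoplus_{i=1}^n M_i$-Rickart if and only if $N$ is dual strongly $M_i$-Rickart for every $i\in\{1,\dots,n\}$.
   Context: A morphism $f:X\to Y$ is a section if $f'f=1_X$ for some $f'$, a retraction if $ff'=1_Y$ for some $f'$. A monomorphism $k:K\to X$ is fully invariant if for every $h:X\to X$ there is $\alpha:K\to K$ with $hk=k\alpha$; an epimorphism $c:X\to C$ is fully coinvariant if for every $h:X\to X$ there is $\gamma:C\to C$ with $ch=\gamma c$. For objects $M,N$: $N$ is strongly $M$-Rickart if the kernel of every morphism $f:M\to N$ is a fully invariant section; $N$ is dual strongly $M$-Rickart if the cokernel of every morphism $f:M\to N$ is a fully coinvariant retraction. *)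

From HB Require Import structures.
From mathcomp Require Import all_boot all_algebra.
Set Implicit Arguments. Unset Strict Implicit. Unset Printing Implicit Defensive.
Import GRing.Theory.
Local Open Scope ring_scope.

Record preAddCat := PreAddCat {
  Obj : Type;
  Mor : Obj -> Obj -> zmodType;
  comp : forall X Y Z : Obj, Mor Y Z -> Mor X Y -> Mor X Z; (* comp g f = g ∘ f *)
  idm : forall X : Obj, Mor X X;
  compA : forall X Y Z W (h : Mor Z W) (g : Mor Y Z) (f : Mor X Y),
      comp h (comp g f) = comp (comp h g) f;
  comp1m : forall X Y (f : Mor X Y), comp (idm Y) f = f;
  compm1 : forall X Y (f : Mor X Y), comp f (idm X) = f;
  compDl : forall X Y Z (g1 g2 : Mor Y Z) (f : Mor X Y),
      comp (g1 + g2) f = comp g1 f + comp g2 f;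
  compDr : forall X Y Z (g : Mor Y Z) (f1 f2 : Mor X Y),
      comp g (f1 + f2) = comp g f1 + comp g f2
}.
Arguments Mor : clear implicits.
Arguments comp {p X Y Z}.
Arguments idm {p}.

Section Notions.
Variable C : preAddCat.
Local Notation Obj := (Obj C).
Local Notation Mor := (Mor C).

Definition mono (X Y : Obj) (f : Mor X Y) : Prop :=
  forall W (g h : Mor W X), comp f g = comp f h -> g = h.
Definition epi (X Y : Obj) (f : Mor X Y) : Prop :=
  forall W (g h : Mor Y W), comp g f = comp h f -> g = h.

Definition is_kernel (X Y K : Obj) (f : Mor X Y) (k : Mor K X) : Prop :=
  comp f k = 0 /\
  forall W (g : Mor W X), comp f g = 0 -> exists! u : Mor W K, comp k u = g.
Definition is_cokernel (X Y Q : Obj) (f : Mor X Y) (c : Mor Y Q) : Prop :=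
  comp c f = 0 /\
  forall W (g : Mor Y W), comp g f = 0 -> exists! u : Mor Q W, comp u c = g.

Definition is_zero_obj (Z : Obj) : Prop := idm Z = 0.

Definition is_biproduct (n : nat) (N : 'I_n -> Obj) (B : Obj)
    (inj : forall i, Mor (N i) B) (proj : forall i, Mor B (N i)) : Prop :=
  (forall i, comp (proj i) (inj i) = idm (N i)) /\
  (forall i j, i != j -> comp (proj i) (inj j) = 0) /\
  \sum_(i < n) comp (inj i) (proj i) = idm B.

Definition is_abelian : Prop :=
  (exists Z, is_zero_obj Z) /\
  (forall X1 X2 : Obj, exists (B : Obj) (i1 : Mor X1 B) (i2 : Mor X2 B)
        (p1 : Mor B X1) (p2 : Mor B X2),
      [/\ comp p1 i1 = idm X1, comp p2 i2 = idm X2, comp p1 i2 = 0,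
          comp p2 i1 = 0 & comp i1 p1 + comp i2 p2 = idm B]) /\
  (forall X Y (f : Mor X Y), exists K (k : Mor K X), is_kernel f k) /\
  (forall X Y (f : Mor X Y), exists Q (c : Mor Y Q), is_cokernel f c) /\
  (forall K X (k : Mor K X), mono k -> exists Y (f : Mor X Y), is_kernel f k) /\
  (forall Y Q (c : Mor Y Q), epi c -> exists X (f : Mor X Y), is_cokernel f c).

Definition section (X Y : Obj) (f : Mor X Y) : Prop :=
  exists f' : Mor Y X, comp f' f = idm X.
Definition retraction (X Y : Obj) (f : Mor X Y) : Prop :=
  exists f' : Mor Y X, comp f f' = idm Y.

Definition fully_invariant (K X : Obj) (k : Mor K X) : Prop :=
  mono k /\ forall h : Mor X X, exists a : Mor K K, comp h k = comp k a.
Definition fully_coinvariant (X Q : Obj) (c : Mor X Q) : Prop :=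
  epi c /\ forall h : Mor X X, exists g : Mor Q Q, comp c h = comp g c.

(* N is strongly M-Rickart: the kernel of every f : M -> N is a fully
   invariant section *)
Definition strongly_rickart (M N : Obj) : Prop :=
  forall (f : Mor M N) K (k : Mor K M), is_kernel f k ->
    fully_invariant k /\ section k.
(* N is dual strongly M-Rickart: the cokernel of every f : M -> N is a fully
   coinvariant retraction *)
Definition dual_strongly_rickart (M N : Obj) : Prop :=
  forall (f : Mor M N) Q (c : Mor N Q), is_cokernel f c ->
    fully_coinvariant c /\ retraction c.
End Notions.

(* For f : M -> N_1 + ... + N_n, Ker f is the intersection of the kernels
   k_j of the components proj_j f, each a fully invariant direct summand with
   idempotent e_j = k_j r_j.  Full invariance gives h e_j = e_j h e_j for
   every endomorphism h, so proj_j f P e_j = proj_j f e_j P e_j = 0 for every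
   P; hence P = e_1 ... e_n satisfies f P = 0 and fixes Ker f, and writing
   P = k u makes k a section.  Conversely, a kernel of f : M -> N_i is a
   kernel of inj_i f.  Part (2) is part (1) in the opposite category. *)
From Pilot Require Import Defs.
From mathcomp Require Import all_boot all_algebra.
Set Implicit Arguments. Unset Strict Implicit. Unset Printing Implicit Defensive.
Import GRing.Theory.
Local Open Scope ring_scope.
Local Notation comp := Defs.comp.
Local Notation compA := Defs.compA.

Section Composition.
Variable C : preAddCat.

Lemma comp0m (X Y Z : Obj C) (f : Mor C X Y) : comp (0 : Mor C Y Z) f = 0.
Proof. by apply: (addrI (comp 0 f)); rewrite -compDl !addr0. Qed.

Lemma compm0 (X Y Z : Obj C) (g : Mor C Y Z) : comp g (0 : Mor C X Y) = 0.
Proof. by apply: (addrI (comp g 0)); rewrite -compDr !addr0. Qed.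

Lemma comp_suml (X Y Z : Obj C) n (g : 'I_n -> Mor C Y Z) (f : Mor C X Y) :
  comp (\sum_(i < n) g i) f = \sum_(i < n) comp (g i) f.
Proof. by apply: (big_morph (comp^~ f)) => [g1 g2|]; rewrite ?compDl ?comp0m. Qed.

Lemma section_mono (X Y : Obj C) (s : Mor C X Y) : section s -> mono s.
Proof.
by move=> [s' s's] W g h /(congr1 (comp s')); rewrite !compA s's !comp1m.
Qed.

Lemma biproduct_proj_joint_mono n (N : 'I_n -> Obj C) (B : Obj C)
    (inj : forall i, Mor C (N i) B) (proj : forall i, Mor C B (N i)) :
  is_biproduct inj proj ->
  forall W (g : Mor C W B), (forall j, comp (proj j) g = 0) -> g = 0.
Proof.
move=> [_ [_ sum_id]] W g proj_g0.
rewrite -[g]comp1m -sum_id comp_suml big1 // => j _.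
by rewrite -compA proj_g0 compm0.
Qed.

End Composition.

Section Kernels.
Variables (C : preAddCat) (M N K : Obj C) (f : Mor C M N) (k : Mor C K M).
Hypothesis kerk : is_kernel f k.

Lemma kernel_mono : mono k.
Proof.
have [fk0 univ] := kerk; move=> W g h kg_kh.
have fkg0 : comp f (comp k g) = 0 by rewrite compA fk0 comp0m.
have [u [_ u_uniq]] := univ W _ fkg0.
by rewrite -(u_uniq g erefl) (u_uniq h (esym kg_kh)).
Qed.

Lemma kernel_factor W (g : Mor C W M) :
  comp f g = 0 -> exists u : Mor C W K, comp k u = g.
Proof. by move=> /(kerk.2 W g) [u [ku _]]; exists u. Qed.

Lemma kernel_comp_mono (Y : Obj C) (s : Mor C N Y) :
  mono s -> is_kernel (comp s f) k.
Proof.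
move=> s_mono; split; first by rewrite -compA kerk.1 compm0.
move=> W g sfg0; apply: kerk.2; apply: s_mono.
by rewrite compA sfg0 compm0.
Qed.

Lemma kernel_fully_invariant :
  (forall h : Mor C M M, comp f (comp h k) = 0) -> fully_invariant k.
Proof.
move=> fhk0; split; first exact: kernel_mono.
by move=> h; have [a ka] := kernel_factor (fhk0 h); exists a.
Qed.

Definition fixes_kernel (P : Mor C M M) :=
  forall W (g : Mor C W M), comp f g = 0 -> comp P g = g.

Lemma kernel_section_of_projector (P : Mor C M M) :
  comp f P = 0 -> fixes_kernel P -> section k.
Proof.
move=> fP0 P_fix; have [u ku] := kernel_factor fP0.
exists u; apply: kernel_mono.
by rewrite compA ku compm1 P_fix ?kerk.1.
Qed.

End Kernels.

Lemma fully_invariant_section_absorb (C : preAddCat) (K M : Obj C)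
    (k : Mor C K M) (r : Mor C M K) :
  fully_invariant k -> comp r k = idm K ->
  forall h : Mor C M M, comp h (comp k r) = comp (comp k r) (comp h (comp k r)).
Proof.
move=> [_ k_inv] rk1 h; have [a hk] := k_inv h.
by rewrite compA hk -!compA (compA r) rk1 comp1m.
Qed.

Section Intersection.
Variables (C : preAddCat) (M B : Obj C) (f : Mor C M B).
Variables (n : nat) (N : 'I_n -> Obj C) (p : forall j, Mor C B (N j)).
Hypothesis p_joint_mono :
  forall W (g : Mor C W B), (forall j, comp (p j) g = 0) -> g = 0.
Hypothesis component_kernel : forall j, exists K (kj : Mor C K M),
  [/\ is_kernel (comp (p j) f) kj, fully_invariant kj & section kj].

Lemma component_projector m : (m <= n)%N -> exists P : Mor C M M,
  (forall j : 'I_n, (j < m)%N -> comp (comp (p j) f) P = 0) /\ fixes_kernel f P.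
Proof.
elim: m => [|m IH] m_lt_n.
  by exists (idm M); split=> // W g _; rewrite comp1m.
have [P [P_kills P_fix]] := IH (ltnW m_lt_n).
pose j0 := Ordinal m_lt_n.
have [K0 [k0 [ker0 inv0 [r0 r0k0]]]] := component_kernel j0.
exists (comp P (comp k0 r0)); split.
  move=> j; rewrite ltnS leq_eqVlt => /predU1P [j_m | lt_j_m].
    have -> : j = j0 by apply: val_inj.
    rewrite (fully_invariant_section_absorb inv0 r0k0) !compA.
    by rewrite ker0.1 !comp0m.
  by rewrite compA P_kills // comp0m.
move=> W g fg0.
have [u k0u] : exists u, comp k0 u = g.
  by apply: (kernel_factor ker0); rewrite -compA fg0 compm0.
by rewrite -compA -k0u -(compA k0) (compA r0) r0k0 comp1m P_fix // k0u.
Qed.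

Lemma kernel_fully_invariant_section_of_components (K : Obj C) (k : Mor C K M) :
  is_kernel f k -> fully_invariant k /\ section k.
Proof.
move=> kerk; split.
  apply: (kernel_fully_invariant kerk) => h; apply: p_joint_mono => j.
  have [Kj [kj [kerj [_ kj_inv] _]]] := component_kernel j.
  have [u kju] : exists u, comp kj u = k.
    by apply: (kernel_factor kerj); rewrite -compA kerk.1 compm0.
  have [a hkj] := kj_inv h.
  by rewrite -kju (compA h) hkj -(compA kj) !compA kerj.1 !comp0m.
have [P [P_kills P_fix]] := component_projector (leqnn n).
apply: (kernel_section_of_projector kerk _ P_fix).
by apply: p_joint_mono => j; rewrite compA P_kills.
Qed.

End Intersection.

Lemma strongly_rickart_biproduct (C : preAddCat)
    (has_kernels : forall (X Y : Obj C) (f : Mor C X Y),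
        exists K (k : Mor C K X), is_kernel f k)
    n (M : Obj C) (N : 'I_n -> Obj C) (B : Obj C)
    (inj : forall i, Mor C (N i) B) (proj : forall i, Mor C B (N i)) :
  is_biproduct inj proj ->
  (strongly_rickart M B <-> forall i, strongly_rickart M (N i)).
Proof.
move=> bip; have [proj_inj _] := bip; split.
  move=> rickB i f K k kerk; apply: (rickB (comp (inj i) f)).
  apply: (kernel_comp_mono kerk); apply: section_mono.
  by exists (proj i); apply: proj_inj.
move=> rickN f K k.
apply: kernel_fully_invariant_section_of_components.
  exact: biproduct_proj_joint_mono bip.
move=> j; have [Kj [kj kerj]] := has_kernels _ _ (comp (proj j) f).
have [kj_inv kj_sec] := rickN j _ _ _ kerj.
by exists Kj, kj.
Qed.

(* Kernels, monos, fully invariant morphisms and sections of [opC C] are, by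
   definition, cokernels, epis, fully coinvariant morphisms and retractions of
   [C]: [dual_strongly_rickart M N] is convertible to
   [@strongly_rickart (opC C) N M]. *)
Definition opC (C : preAddCat) : preAddCat :=
  @PreAddCat (Obj C) (fun X Y => Mor C Y X) (fun X Y Z g f => comp f g)
    (fun X => idm X) (fun X Y Z W h g f => esym (compA f g h))
    (fun X Y f => compm1 f) (fun X Y f => comp1m f)
    (fun X Y Z g1 g2 f => compDr f g1 g2) (fun X Y Z g f1 f2 => compDl f1 f2 g).

Lemma kernels_opC (C : preAddCat) :
  (forall (X Y : Obj C) (f : Mor C X Y), exists Q (c : Mor C Y Q), is_cokernel f c) ->
  forall (X Y : Obj (opC C)) (f : Mor (opC C) X Y),
    exists K (k : Mor (opC C) K X), is_kernel f k.
Proof. by move=> has_cokernels X Y f; apply: has_cokernels. Qed.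

Lemma is_biproduct_opC (C : preAddCat) n (M : 'I_n -> Obj C) (B : Obj C)
    (inj : forall i, Mor C (M i) B) (proj : forall i, Mor C B (M i)) :
  is_biproduct inj proj -> @is_biproduct (opC C) n M B proj inj.
Proof.
move=> [proj_inj [proj_inj0 sum_id]]; split=> //; split=> // i j ij.
by apply: proj_inj0; rewrite eq_sym.
Qed.

Theorem theorem3p1 (C : preAddCat) (HC : is_abelian C) :
  (forall (n : nat) (M : Obj C) (N : 'I_n -> Obj C) (B : Obj C)
          (inj : forall i, Mor C (N i) B) (proj : forall i, Mor C B (N i)),
      @is_biproduct C n N B inj proj ->
      (strongly_rickart M B <-> forall i, strongly_rickart M (N i))) /\
  (forall (n : nat) (M : 'I_n -> Obj C) (N : Obj C) (B : Obj C)
          (inj : forall i, Mor C (M i) B) (proj : forall i, Mor C B (M i)),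
      @is_biproduct C n M B inj proj ->
      (dual_strongly_rickart B N <-> forall i, dual_strongly_rickart (M i) N)).
Proof.
have [_ [_ [has_kernels [has_cokernels _]]]] := HC.
split; first exact: strongly_rickart_biproduct.
move=> n M N B inj proj bip.
exact: (strongly_rickart_biproduct (kernels_opC has_cokernels) N
          (is_biproduct_opC bip)).
Qed.
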